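(* Let $\phi$ be a nonconstant rational inner function on $\mathbb{D}^2$ and let $\alpha\in\mathbb{T}$. Then the Clark measure $\sigma_\alpha$ of $\phi$ has no point masses, i.e. $\sigma_\alpha(\{\zeta\})=0$ for every $\zeta\in\mathbb{T}^2$.
   Context: $\mathbb{D}$ is the open unit disk and $\mathbb{T}$ the unit circle. A rational inner function (RIF) on $\mathbb{D}^2$ is a rational function $\phi$ that is holomorphic and bounded on $\mathbb{D}^2$ with $|\phi(\zeta)|=1$ for almost every $\zeta\in\mathbb{T}^2$. The Poisson kernel of $\mathbb{D}^2$ is $P_z(\zeta)=\frac{(1-|z_1|^2)(1-|z_2|^2)}{|\zeta_1-z_1|^2|\zeta_2-z_2|^2}$ for $z\in\mathbb{D}^2,\ \zeta\in\mathbb{T}^2$. For $\alpha\in\mathbb{T}$, the Clark measure $\sigma_\alpha$ of $\phi$ is the unique positive (finite) Borel measure on $\mathbb{T}^2$ such that $\frac{1-|\phi(z)|^2}{|\alpha-\phi(z)|^2}=\int_{\mathbb{T}^2}P_z(\zeta)\,d\sigma_\alpha(\zeta)$ for all $z\in\mathbb{D}^2$. *)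

From HB Require Import structures.
From mathcomp Require Import all_boot all_order all_algebra.
From mathcomp Require Import all_classical all_reals all_analysis.
From mathcomp Require Import complex.
Set Implicit Arguments. Unset Strict Implicit. Unset Printing Implicit Defensive.
Import Order.TTheory GRing.Theory Num.Theory.
Import numFieldNormedType.Exports.
Local Open Scope classical_set_scope.
Local Open Scope ring_scope.

Definition expiC (R : realType) (t : R) : R[i] := (cos t +i* sin t)%C.

Definition cabs (R : realType) (z : R[i]) : R := ComplexField.Normc.normc z.

Definition inD (R : realType) (z : R[i]) : Prop := cabs z < 1.

(* evaluation of a polynomial in two complex variables (as {poly {poly C}},
   the inner variable being z1 and the outer one z2) at (z1, z2) *)
Definition peval2 (R : realType) (p : {poly {poly R[i]}}) (z1 z2 : R[i]) : R[i] :=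
  (p.[z2%:P]).[z1].

(* phi (a function on D^2, curried) is a rational inner function on D^2:
   phi = p/q on D^2 with q zero-free on D^2 (so phi is rational and holomorphic
   on D^2), phi is bounded on D^2, and the rational function p/q has modulus 1
   at a.e. point (e^{it1}, e^{it2}) of T^2 (a.e. w.r.t. Lebesgue measure in the
   angles; this is a periodic condition, so a.e. on R^2 = a.e. on T^2). *)
Definition is_RIF (R : realType) (phi : R[i] -> R[i] -> R[i]) : Prop :=
  exists p q : {poly {poly R[i]}},
    (forall z1 z2, inD z1 -> inD z2 ->
       peval2 q z1 z2 != 0 /\ phi z1 z2 = peval2 p z1 z2 / peval2 q z1 z2)
    /\ (exists M : R, forall z1 z2, inD z1 -> inD z2 -> cabs (phi z1 z2) <= M)
    /\ {ae (@lebesgue_measure R \x @lebesgue_measure R)%E, forall t : R * R,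
          peval2 q (expiC t.1) (expiC t.2) != 0 /\
          cabs (peval2 p (expiC t.1) (expiC t.2) / peval2 q (expiC t.1) (expiC t.2)) = 1}.

Definition poisson2 (R : realType) (z1 z2 : R[i]) (t : R * R) : R :=
  ((1 - cabs z1 ^+ 2) * (1 - cabs z2 ^+ 2)) /
  (cabs (expiC t.1 - z1) ^+ 2 * cabs (expiC t.2 - z2) ^+ 2).

(* T^2 is parametrized by angles in [0, 2pi) x [0, 2pi): a finite positive Borel
   measure on T^2 is a finite measure on R x R carried by [0,2pi) x [0,2pi).
   sigma is a Clark measure of phi for alpha if it satisfies the defining
   Poisson-integral identity on D^2. *)
Definition is_clark_measure (R : realType) (phi : R[i] -> R[i] -> R[i])
    (alpha : R[i]) (sigma : {measure set (R * R)%type -> \bar R}) : Prop :=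
  (sigma setT < +oo)%E
  /\ sigma (~` (`[0, 2 * pi[ `*` `[0, 2 * pi[)) = 0%E
  /\ forall z1 z2, inD z1 -> inD z2 ->
       ((1 - cabs (phi z1 z2) ^+ 2) / cabs (alpha - phi z1 z2) ^+ 2)%:E
       = (\int[sigma]_(t in setT) (poisson2 z1 z2 t)%:E)%E.

From HB Require Import structures.
From mathcomp Require Import all_boot all_order all_algebra.
From mathcomp Require Import all_classical all_reals all_analysis.
From mathcomp Require Import complex.
From mathcomp Require Import ring lra zify.
Import Order.TTheory GRing.Theory Num.Theory.
Local Open Scope classical_set_scope.
Local Open Scope ring_scope.

(* Suppose sigma {zeta} = m > 0 for zeta = (a, b) in T^2 and restrict to the
   complex line l |-> (a l, b l) through zeta.  There phi = P / Q for
   one-variable polynomials P, Q with Q zero-free on D, and the Poisson kernel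
   of (a l, b l) at zeta is k(l)^2 with k(l) = (1 - |l|^2) / |1 - l|^2.
   Bounding the Clark integral from below by the atom gives, with
   D = alpha Q - P,
        m k(l)^2 |D(l)|^2 <= 2 Re (alpha Q(l) conj D(l))     (|l| < 1).
   Write Q = Q1 (X - 1)^j and D = E (X - 1)^k with Q1(1), E(1) nonzero.
   - If k <= j + 1, the inequality on the radius [0, 1) gives
     m |D(r)| <= 2 (1 - r)^2 |Q(r)|, which fails as r -> 1 by comparing the
     orders of vanishing at 1 (radial_obstruction).
   - If k >= j + 2, on the segments l = 1 - e e^(i th), |th| < pi/2, the sign
     of Re (alpha Q conj D) is that of Re (c e^(-i (k - j) th)) for a fixed
     c != 0, and these angles sweep more than a half-plane
     (angular_obstruction).
   After general facts on the complex modulus and on polynomials, the two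
   obstructions are combined in slice_obstruction.  The section
   LineRestriction restricts polynomials and the Poisson kernel to the line
   and bounds an integral below by an atom; the section NoAtom derives the
   slice inequality from the Clark identity (slice_inequality) and concludes
   (no_atom). *)

Section ComplexModulus.
Context {R : realType}.
Local Notation C := R[i].
Local Open Scope complex_scope.

Lemma cabs_sqr (z : C) : cabs z ^+ 2 = complex.Re z ^+ 2 + complex.Im z ^+ 2.
Proof. by case: z => a b; rewrite /cabs /= sqr_sqrtr // addr_ge0 ?sqr_ge0. Qed.

Lemma cabs_ge0 (z : C) : 0 <= cabs z.
Proof. by case: z => a b; exact: sqrtr_ge0. Qed.

Lemma cabsM (x y : C) : cabs (x * y) = cabs x * cabs y.
Proof. exact: ComplexField.Normc.normcM. Qed.

Lemma cabsV (z : C) : cabs z^-1 = (cabs z)^-1.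
Proof. exact: ComplexField.Normc.normcV. Qed.

Lemma cabsD (x y : C) : cabs (x + y) <= cabs x + cabs y.
Proof. exact: le_normcD. Qed.

Lemma cabsN (x : C) : cabs (- x) = cabs x.
Proof. exact: normcN. Qed.

Lemma cabs1 : cabs (1 : C) = 1.
Proof. exact: ComplexField.Normc.normc1. Qed.

Lemma cabs_eq0 (x : C) : (cabs x == 0) = (x == 0).
Proof.
apply/eqP/eqP => [/ComplexField.Normc.eq0_normc //|->].
exact: ComplexField.Normc.normc0.
Qed.

Lemma cabs0 : cabs (0 : C) = 0.
Proof. by apply/eqP; rewrite cabs_eq0. Qed.

Lemma cabs_gt0 {x : C} : x != 0 -> 0 < cabs x.
Proof. by move=> x0; rewrite lt_def cabs_eq0 x0 cabs_ge0. Qed.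

Lemma cabsX (x : C) n : cabs (x ^+ n) = cabs x ^+ n.
Proof. by elim: n => [|n IH]; rewrite ?expr0 ?cabs1 // !exprS cabsM IH. Qed.

Lemma cabs_conj (x : C) : cabs x^*%C = cabs x.
Proof. by case: x => a b; rewrite /cabs /= sqrrN. Qed.

Lemma cabs_real (r : R) : cabs r%:C = `|r|.
Proof. by rewrite /cabs /= expr0n /= addr0 sqrtr_sqr. Qed.

Lemma cabs_sum I (r : seq I) (F : I -> C) :
  cabs (\sum_(i <- r) F i) <= \sum_(i <- r) cabs (F i).
Proof.
elim: r => [|a r IH]; first by rewrite !big_nil cabs0.
by rewrite !big_cons; apply: le_trans (cabsD _ _) _; exact: lerD.
Qed.

Lemma Re_le_cabs (z : C) : complex.Re z <= cabs z.
Proof.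
case: z => a b; rewrite /cabs /=.
have [a0|a0] := leP a 0; first exact: le_trans a0 (sqrtr_ge0 _).
rewrite -[leLHS](ger0_norm (ltW a0)) -sqrtr_sqr.
by apply: ler_wsqrtr; rewrite lerDl sqr_ge0.
Qed.

(* conjugation commutes with powers (stated for the conjugation of R[i], so
   that rewriting keeps the conj notation) *)
Lemma conjcX (x : C) n : (x ^+ n)^*%C = x^*%C ^+ n.
Proof. exact: rmorphXn. Qed.

Lemma Re_realM (s : R) (z : C) : complex.Re (s%:C * z) = s * complex.Re z.
Proof. by case: z => a b /=; ring. Qed.

Lemma cabsB_sqr (u v : C) :
  cabs (u - v) ^+ 2 = cabs u ^+ 2 - 2 * complex.Re (u * v^*%C) + cabs v ^+ 2.
Proof. by rewrite !cabs_sqr; case: u => a b; case: v => c d /=; ring. Qed.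

Lemma cabs_expiC (t : R) : cabs (expiC t) = 1.
Proof. by rewrite /cabs /expiC /= cos2Dsin2 sqrtr1. Qed.

Lemma expiC_conj (t : R) : expiC t * (expiC t)^*%C = 1.
Proof.
apply/eqP; rewrite /expiC eq_complex /=; apply/andP; split; apply/eqP; last by ring.
by rewrite -(cos2Dsin2 t); ring.
Qed.

Lemma expiC_exp n (t : R) : expiC t ^+ n = expiC (n%:R * t).
Proof.
elim: n => [|n IH]; first by rewrite expr0 mul0r /expiC cos0 sin0.
rewrite exprS IH /expiC /= -natr1 mulrDl mul1r cosD sinD.
by apply/eqP; rewrite eq_complex /=; apply/andP; split; apply/eqP; ring.
Qed.

Lemma Re_conj_expiC (y : R) (c : C) :
  complex.Re ((expiC y)^*%C * c) = cos y * complex.Re c + sin y * complex.Im c.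
Proof. by case: c => a b; rewrite /expiC /=; ring. Qed.

Lemma cabs_segment_lt1 (e th : R) : 0 < e <= cos th -> cabs (1 - e%:C * expiC th) < 1.
Proof.
move=> /andP[e0 ec]; have c0 := cabs_ge0 (1 - e%:C * expiC th).
suff : cabs (1 - e%:C * expiC th) ^+ 2 < 1 by nra.
rewrite cabs_sqr /expiC /=.
have -> : (1 - (e * cos th - 0 * sin th)) ^+ 2 + (0 - (e * sin th + 0 * cos th)) ^+ 2
   = 1 - 2 * e * cos th + e ^+ 2 * (cos th ^+ 2 + sin th ^+ 2) by ring.
by rewrite cos2Dsin2; nra.
Qed.

End ComplexModulus.

Section PolynomialEstimates.
Context {R : realType}.
Local Notation C := R[i].
Local Open Scope complex_scope.

Definition coef_norm (p : {poly C}) : R := \sum_(i < size p) cabs p`_i.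

Lemma coef_norm_ge0 p : 0 <= coef_norm p.
Proof. by apply: sumr_ge0 => i _; exact: cabs_ge0. Qed.

Lemma horner_bound (p : {poly C}) z : cabs z <= 1 -> cabs p.[z] <= coef_norm p.
Proof.
move=> z1; rewrite horner_coef; apply: le_trans (cabs_sum _ _ _) _.
apply: ler_sum => i _; rewrite cabsM cabsX.
by apply: ler_piMr; rewrite ?cabs_ge0 // exprn_ile1 ?cabs_ge0.
Qed.

Lemma horner_lipschitz (p : {poly C}) (x : C) : exists2 B, 0 <= B &
  forall z, cabs z <= 1 -> cabs (p.[z] - p.[x]) <= B * cabs (z - x).
Proof.
have : root (p - (p.[x])%:P) x by rewrite /root !hornerE subrr.
move=> /factor_theorem [s Hs]; exists (coef_norm s); first exact: coef_norm_ge0.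
move=> z z1; have -> : p.[z] - p.[x] = (p - (p.[x])%:P).[z] by rewrite !hornerE.
by rewrite Hs hornerM !hornerE cabsM ler_wpM2r ?cabs_ge0 ?horner_bound.
Qed.

Lemma product_lipschitz (p q : {poly C}) (al x : C) : exists2 K, 0 <= K &
  forall z, cabs z <= 1 ->
    cabs (al * p.[z] * q.[z]^*%C - al * p.[x] * q.[x]^*%C) <= K * cabs (z - x).
Proof.
have [Bp Bp0 HBp] := horner_lipschitz p x.
have [Bq Bq0 HBq] := horner_lipschitz q x.
exists (cabs al * (Bp * coef_norm q + cabs p.[x] * Bq)).
  by rewrite mulr_ge0 ?cabs_ge0 // addr_ge0 ?mulr_ge0 ?cabs_ge0 ?coef_norm_ge0.
move=> z z1; have dz := cabs_ge0 (z - x).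
have -> : al * p.[z] * q.[z]^*%C - al * p.[x] * q.[x]^*%C
    = al * ((p.[z] - p.[x]) * q.[z]^*%C + p.[x] * (q.[z] - q.[x])^*%C).
  by rewrite rmorphB; ring.
rewrite cabsM -mulrA; apply: ler_wpM2l; first exact: cabs_ge0.
apply: le_trans (cabsD _ _) _; rewrite !cabsM !cabs_conj mulrDl.
apply: lerD; last by rewrite -mulrA ler_wpM2l ?cabs_ge0 ?HBq.
rewrite mulrAC; apply: ler_pM; rewrite ?cabs_ge0 ?HBp ?horner_bound //.
Qed.

Lemma root_multiplicity (p : {poly C}) x : p != 0 ->
  exists n q, p = q * ('X - x%:P) ^+ n /\ q.[x] != 0.
Proof.
move=> p0; case: (multiplicity_XsubC p x) => n [q]; rewrite p0 /= /root => hq ->.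
by exists n, q.
Qed.

End PolynomialEstimates.

Lemma no_linear_bound {R : realFieldType} (c K d : R) : 0 < c -> 0 < d ->
  ~ (forall e, 0 < e <= d -> c <= e * K).
Proof.
move=> c0 d0 H; have Hd := H d; rewrite lexx d0 in Hd.
have [K0|K0] := leP K 0; first by have := Hd isT; nra.
have [hd|hd] := leP (c / (2 * K)) d; last first.
  by move: hd; rewrite ltr_pdivlMr ?mulr_gt0 //; have := Hd isT; nra.
have e0 : 0 < c / (2 * K) by rewrite divr_gt0 // mulr_gt0.
have := H (c / (2 * K)); rewrite e0 hd => /(_ isT).
have -> : c / (2 * K) * K = c / 2 by field; rewrite gt_eqF.
lra.
Qed.

Section SliceObstruction.
Context {R : realType}.
Local Notation C := R[i].
Local Open Scope complex_scope.

Lemma radial_obstruction (Q1 E : {poly C}) (j k : nat) (m : R) :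
  0 < m -> E.[1] != 0 -> (k <= j.+1)%N ->
  ~ (forall r : R, 0 <= r < 1 -> m * cabs (E * ('X - 1) ^+ k).[r%:C]
                                 <= 2 * (1 - r) ^+ 2 * cabs (Q1 * ('X - 1) ^+ j).[r%:C]).
Proof.
move=> m0 E1 kj H.
have [B B0 HB] := horner_lipschitz E 1.
apply: (@no_linear_bound _ (m * cabs E.[1]) (2 * coef_norm Q1 + m * B) 1).
- by rewrite mulr_gt0 ?cabs_gt0.
- exact: ltr01.
move=> e /andP[e0 e1]; set l : C := (1 - e)%:C.
have l_le1 : cabs l <= 1 by rewrite cabs_real ger0_norm; lra.
have dist : cabs (l - 1) = e.
  have -> : l - 1 = (- e)%:C by rewrite /l rmorphB rmorph1 rmorphN; ring.
  by rewrite cabs_real normrN ger0_norm // ltW.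
have r01 : 0 <= 1 - e < 1 by apply/andP; split; lra.
have := H _ r01; rewrite -/l !hornerM !horner_exp !hornerXsubC !cabsM !cabsX dist.
have -> : 1 - (1 - e) = e by ring.
move=> bound.
(* as e^(j + 2) <= e^(k + 1), dividing the bound at r = 1 - e by e^k gives
   m |E(1 - e)| = O(e), which contradicts E(1) != 0 *)
have hpow : e ^+ 2 * e ^+ j <= e ^+ k * e.
  by rewrite -exprD -exprSr (ler_wiXn2l (ltW e0) e1); lia.
have Eclose : m * cabs E.[l] <= 2 * e * coef_norm Q1.
  have ek0 : 0 < e ^+ k by rewrite exprn_gt0.
  rewrite -(ler_pM2l ek0).
  have -> : e ^+ k * (m * cabs E.[l]) = m * (cabs E.[l] * e ^+ k) by ring.
  apply: le_trans bound _.
  have -> : e ^+ k * (2 * e * coef_norm Q1) = 2 * (e ^+ k * e * coef_norm Q1) by ring.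
  have -> : 2 * e ^+ 2 * (cabs Q1.[l] * e ^+ j) = 2 * (e ^+ 2 * e ^+ j * cabs Q1.[l]).
    by ring.
  apply: ler_wpM2l => //; apply: ler_pM _ _ hpow (horner_bound Q1 l l_le1).
  - by rewrite mulr_ge0 ?exprn_ge0 ?ltW.
  - exact: cabs_ge0.
have tri : cabs E.[1] <= cabs E.[l] + B * e.
  have -> : E.[1] = E.[l] - (E.[l] - E.[1]) by ring.
  by apply: le_trans (cabsD _ _) _; rewrite cabsN lerD // -dist HB.
have := ler_wpM2l (ltW m0) tri; nra.
Qed.

(* a complex number c with Re (e^(-i x) c) >= 0 for all |x| <= 3 pi / 4 is 0:
   the angles 0, pi/2, -pi/2 and 3 pi / 4 already force it *)
Lemma wide_sector_nonneg_eq0 (c : C) :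
  (forall x : R, -(pi / 2 + pi / 4) <= x <= pi / 2 + pi / 4 ->
     0 <= complex.Re ((expiC x)^*%C * c)) -> c = 0.
Proof.
case: c => c1 c2 key; have pi0 : (0 : R) < pi := pi_gt0 R.
have at_angle x : -(pi / 2 + pi / 4) <= x <= pi / 2 + pi / 4 ->
    0 <= cos x * c1 + sin x * c2.
  by move=> hx; have := key x hx; rewrite Re_conj_expiC.
have c1_ge0 : 0 <= c1.
  have := at_angle 0; rewrite cos0 sin0 mul1r mul0r addr0.
  by apply; apply/andP; split; lra.
have c2_ge0 : 0 <= c2.
  have := at_angle (pi / 2); rewrite cos_pihalf sin_pihalf mul0r add0r mul1r.
  by apply; apply/andP; split; lra.
have c2_le0 : c2 <= 0.
  have := at_angle (- (pi / 2)); rewrite cosN sinN cos_pihalf sin_pihalf mul0r add0r.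
  by rewrite mulN1r oppr_ge0; apply; apply/andP; split; lra.
have c2_eq0 : c2 = 0 by lra.
have sin_gt0 : 0 < sin (pi / 4 : R).
  by apply: sin_gt0_pihalf; apply/andP; split; lra.
have c1_le0 : 0 <= - sin (pi / 4) * c1.
  have := at_angle (pi / 4 + pi / 2); rewrite cosDpihalf c2_eq0 mulr0 addr0.
  by apply; apply/andP; split; lra.
by congr Complex; nra.
Qed.

(* for n >= 2 the angles n th, |th| < pi / 2, cover [-3 pi / 4, 3 pi / 4] *)
Lemma no_sector_nonneg (c : C) (n : nat) : (2 <= n)%N ->
  (forall th : R, -(pi / 2) < th < pi / 2 ->
     0 <= complex.Re ((expiC (n%:R * th))^*%C * c)) -> c = 0.
Proof.
move=> n2 H; apply: wide_sector_nonneg_eq0 => x /andP[x1 x2].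
have n0 : (0 : R) < n%:R by rewrite ltr0n; lia.
have n2' : (2 : R) <= n%:R by rewrite ler_nat.
have pi0 : (0 : R) < pi := pi_gt0 R.
have -> : x = n%:R * (x / n%:R) by rewrite mulrC divfK // gt_eqF.
apply: H.
have hx : `|x| <= pi / 2 + pi / 4 by rewrite ler_norml x1 x2.
have inv_n : n%:R^-1 <= 2^-1 :> R by rewrite lef_pV2 ?posrE // (lt_le_trans _ n2').
have hb : `|x / n%:R| <= (pi / 2 + pi / 4) / 2.
  rewrite normrM [`|n%:R^-1|]ger0_norm ?invr_ge0 ?ler0n //.
  apply: le_trans (ler_wpM2l (normr_ge0 x) inv_n) _.
  by apply: ler_wpM2r hx; rewrite invr_ge0.
by move: hb; rewrite ler_norml => /andP[h1 h2]; apply/andP; split; lra.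
Qed.

Lemma conj_pair_power (x : R) (a b : C) (j n : nat) : a * b = 1 ->
  (- (x%:C * a)) ^+ j * (- (x%:C * b)) ^+ (j + n) =
  (x ^+ (2 * j + n))%:C * ((-1) ^+ n * b ^+ n).
Proof.
move=> ab; rewrite exprD mulrA -exprMn.
have -> : - (x%:C * a) * - (x%:C * b) = (x ^+ 2)%:C.
  by rewrite mulrNN mulrACA ab mulr1 rmorphXn.
have -> : - (x%:C * b) = (-1) * x%:C * b by ring.
by rewrite !exprMn -!rmorphXn -exprM mulnC exprD rmorphM; ring.
Qed.

Lemma segment_product (Q1 E : {poly C}) (al : C) (j n : nat) {e th : R} {l : C} :
  l - 1 = - (e%:C * expiC th) ->
  al * (Q1 * ('X - 1) ^+ j).[l] * ((E * ('X - 1) ^+ (j + n)).[l])^*%C =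
  (e ^+ (2 * j + n))%:C *
    ((-1) ^+ n * (expiC (n%:R * th))^*%C * (al * Q1.[l] * (E.[l])^*%C)).
Proof.
move=> hl.
have hc : (l - 1)^*%C = - (e%:C * (expiC th)^*%C).
  rewrite hl; case: (expiC th) => u1 u2.
  by apply/eqP; rewrite eq_complex /=; apply/andP; split; apply/eqP; ring.
transitivity (al * Q1.[l] * (E.[l])^*%C * ((l - 1) ^+ j * (l - 1)^*%C ^+ (j + n))).
  by rewrite !hornerM !horner_exp !hornerXsubC rmorphM rmorphXn; ring.
by rewrite hc hl conj_pair_power ?expiC_conj // -expiC_exp conjcX; ring.
Qed.

Lemma angular_obstruction (Q1 E : {poly C}) (j n : nat) (al : C) :
  (2 <= n)%N -> al != 0 -> Q1.[1] != 0 -> E.[1] != 0 ->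
  ~ (forall l : C, cabs l < 1 ->
     0 <= complex.Re (al * (Q1 * ('X - 1) ^+ j).[l] * ((E * ('X - 1) ^+ (j + n)).[l])^*%C)).
Proof.
move=> n2 al0 Q0 E0 H.
pose G l := al * Q1.[l] * (E.[l])^*%C.
have [K K0 HK] := product_lipschitz Q1 E al 1.
have /negP[] : (-1) ^+ n * G 1 != 0 by rewrite !mulf_neq0 ?signr_eq0 ?conjc_eq0.
apply/eqP; apply: (no_sector_nonneg _ _ n2) => th /cos_gt0_pihalf cos_gt0.
set y := (-1) ^+ n * (expiC (n%:R * th))^*%C.
have cabs_y : cabs y = 1.
  by rewrite cabsM cabsX cabsN cabs1 expr1n mul1r cabs_conj cabs_expiC.
have -> : (expiC (n%:R * th))^*%C * ((-1) ^+ n * G 1) = y * G 1 by rewrite /y; ring.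
rewrite leNgt; apply/negP => neg.
apply: (@no_linear_bound _ (- complex.Re (y * G 1)) K (cos th)) => [|//|e /andP[e0 ec]].
  by rewrite oppr_gt0.
set l := 1 - e%:C * expiC th.
have hl : cabs l < 1 by apply: cabs_segment_lt1; rewrite e0 ec.
have hl1 : l - 1 = - (e%:C * expiC th) by rewrite /l; ring.
have dist : cabs (l - 1) = e.
  by rewrite hl1 cabsN cabsM cabs_expiC mulr1 cabs_real ger0_norm // ltW.
have Gl : 0 <= complex.Re (y * G l).
  have := H l hl; rewrite (segment_product Q1 E al j n hl1) Re_realM.
  by rewrite pmulr_rge0 // exprn_gt0.
have : complex.Re (y * (G l - G 1)) <= e * K.
  apply: le_trans (Re_le_cabs _) _.
  by rewrite cabsM cabs_y mul1r -dist mulrC HK // ltW.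
by rewrite mulrBr raddfB /=; lra.
Qed.

Lemma slice_obstruction (Q D : {poly C}) (al : C) (m : R) :
  0 < m -> al != 0 -> Q != 0 -> D != 0 ->
  (forall r : R, 0 <= r < 1 -> m * cabs D.[r%:C] <= 2 * (1 - r) ^+ 2 * cabs Q.[r%:C]) ->
  ~ (forall l : C, cabs l < 1 -> 0 <= complex.Re (al * Q.[l] * (D.[l])^*%C)).
Proof.
move=> m0 al0 Q0 D0 radial halfplane.
have [j [Q1 [EQ Q10]]] := root_multiplicity Q 1 Q0.
have [k [E [ED E0]]] := root_multiplicity D 1 D0.
rewrite polyC1 in EQ ED.
have [kj|jk] := leqP k j.+1.
  by apply: (radial_obstruction Q1 E j k m m0 E0 kj) => r hr; rewrite -EQ -ED; apply: radial.
have n2 : (2 <= k - j)%N by lia.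
apply: (angular_obstruction Q1 E j (k - j) al n2 al0 Q10 E0) => l hl.
by rewrite subnKC ?(ltnW (ltnW jk)) // -EQ -ED; apply: halfplane.
Qed.

End SliceObstruction.

Section LineRestriction.
Context {R : realType}.
Local Notation C := R[i].
Local Open Scope complex_scope.
Import HBNNSimple.

Definition line_restriction (p : {poly {poly C}}) (a b : C) : {poly C} :=
  \sum_(i < size p) (p`_i \Po (a *: 'X)) * (b *: 'X) ^+ i.

Lemma line_restrictionE p a b l :
  (line_restriction p a b).[l] = peval2 p (a * l) (b * l).
Proof.
rewrite /line_restriction /peval2 horner_sum [p.[_]]horner_coef horner_sum.
apply: eq_bigr => i _.
by rewrite !hornerM horner_comp !horner_exp hornerZ hornerX hornerC hornerZ hornerX.
Qed.

Definition disk_kernel (l : C) : R := (1 - cabs l ^+ 2) / cabs (1 - l) ^+ 2.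

Lemma poisson2_line (t : R * R) l :
  poisson2 (expiC t.1 * l) (expiC t.2 * l) t = disk_kernel l ^+ 2.
Proof.
have shift u : expiC u - expiC u * l = expiC u * (1 - l) by ring.
rewrite /poisson2 !shift !cabsM !cabs_expiC !mul1r.
by rewrite /disk_kernel [RHS]expr2 mulf_div.
Qed.

Lemma disk_kernel_real (r : R) : 0 <= r < 1 -> disk_kernel r%:C = (1 + r) / (1 - r).
Proof.
move=> /andP[r0 r1]; rewrite /disk_kernel.
have -> : 1 - r%:C = (1 - r)%:C :> C by rewrite rmorphB rmorph1.
rewrite !cabs_real (ger0_norm r0) ger0_norm ?subr_ge0 ?(ltW r1) //.
by field; rewrite subr_eq0 gt_eqF.
Qed.

Lemma poisson2_ge0 (z1 z2 : C) (x : R * R) : inD z1 -> inD z2 -> 0 <= poisson2 z1 z2 x.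
Proof.
rewrite /inD /poisson2 => h1 h2; have c1 := cabs_ge0 z1; have c2 := cabs_ge0 z2.
apply: divr_ge0; last by rewrite mulr_ge0 ?sqr_ge0.
by apply: mulr_ge0; nra.
Qed.

Lemma measurable_point (t : R * R) : measurable [set t].
Proof.
have -> : [set t] = [set t.1] `*` [set t.2].
  by apply/seteqP; split => [x -> //|[x1 x2] /= [-> ->]]; case: t.
by apply: measurableX; apply: measurable_set1.
Qed.

(* the integral of a nonnegative function dominates its value at an atom times
   the mass of the atom (no measurability of f is needed: compare with the
   simple function f t 1_{t}) *)
Lemma atom_le_integral (sigma : {measure set (R * R)%type -> \bar R})
  (f : R * R -> R) (t : R * R) : (forall x, 0 <= f x) ->
  ((f t)%:E * sigma [set t] <= \int[sigma]_(x in setT) (f x)%:E)%E.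
Proof.
move=> f0; have mt := measurable_point t.
pose h := scale_nnsfun (indic_nnsfun R mt) (f0 t).
have hE : sintegral sigma h = ((f t)%:E * sigma [set t])%E.
  have /= -> := sintegralrM sigma (f t) (indic_nnsfun R mt).
  by rewrite sintegral_indic.
rewrite -hE ge0_integralTE; last by move=> x; rewrite lee_fin.
apply: ereal_sup_ubound; exists h => //= x; rewrite lee_fin /=.
rewrite measurable_realfun.mindicE; case: (boolP (x \in _)).
  by rewrite inE => ->; rewrite mulr1.
by rewrite mulr0.
Qed.

Lemma clark_density_bound {al Pv Qv : C} {x : R} : cabs al = 1 -> Qv != 0 -> 0 < x ->
  x <= (1 - cabs (Pv / Qv) ^+ 2) / cabs (al - Pv / Qv) ^+ 2 ->
  al * Qv - Pv != 0 /\
  x * cabs (al * Qv - Pv) ^+ 2 <= 2 * complex.Re (al * Qv * (al * Qv - Pv)^*%C).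
Proof.
move=> al1 Q0 x0; set Dv := al * Qv - Pv.
have -> : al - Pv / Qv = Dv / Qv by rewrite /Dv; field.
have [->|D0] := eqVneq Dv 0; first by rewrite mul0r cabs0 expr0n /= invr0 mulr0; lra.
move=> H; split => //.
have q0 := cabs_gt0 Q0; have d0 := cabs_gt0 D0.
move: H; rewrite !cabsM !cabsV.
have -> : (1 - (cabs Pv * (cabs Qv)^-1) ^+ 2) / (cabs Dv * (cabs Qv)^-1) ^+ 2
   = (cabs Qv ^+ 2 - cabs Pv ^+ 2) / cabs Dv ^+ 2 by field; rewrite !gt_eqF.
rewrite ler_pdivlMr ?exprn_gt0 // => H.
have eP : Pv = al * Qv - Dv by rewrite /Dv; ring.
have := cabsB_sqr (al * Qv) Dv; rewrite -eP cabsM al1 mul1r.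
have := sqr_ge0 (cabs Dv); lra.
Qed.

(* on the radius l = r, the slice inequality yields the radial bound *)
Lemma radial_bound {m r d q v : R} : 0 < m -> 0 <= r < 1 -> 0 < d ->
  m * ((1 + r) / (1 - r)) ^+ 2 * d ^+ 2 <= 2 * v -> v <= q * d ->
  m * d <= 2 * (1 - r) ^+ 2 * q.
Proof.
move=> m0 /andP[r0 r1] d0 hv vq.
have h1 : m * (1 + r) ^+ 2 * d ^+ 2 <= 2 * (q * d) * (1 - r) ^+ 2.
  have -> : m * (1 + r) ^+ 2 * d ^+ 2
      = m * ((1 + r) / (1 - r)) ^+ 2 * d ^+ 2 * (1 - r) ^+ 2.
    by field; rewrite subr_eq0 gt_eqF.
  by rewrite ler_wpM2r ?sqr_ge0 // (le_trans hv) // ler_wpM2l.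
have h2 : m * d ^+ 2 <= m * (1 + r) ^+ 2 * d ^+ 2.
  by rewrite -mulrA ler_pM2l // ler_peMl ?sqr_ge0 // exprn_ege1 // lerDl.
rewrite -(ler_pM2r d0); lra.
Qed.

End LineRestriction.

Section NoAtom.
Context {R : realType}.
Local Notation C := R[i].
Local Open Scope complex_scope.
Context {phi : C -> C -> C} {p q : {poly {poly C}}} {alpha : C}
  {sigma : {measure set (R * R)%type -> \bar R}} {t : R * R} {m : R}.
Hypothesis phi_pq : forall z1 z2, inD z1 -> inD z2 ->
  peval2 q z1 z2 != 0 /\ phi z1 z2 = peval2 p z1 z2 / peval2 q z1 z2.
Hypothesis clark : forall z1 z2, inD z1 -> inD z2 ->
  ((1 - cabs (phi z1 z2) ^+ 2) / cabs (alpha - phi z1 z2) ^+ 2)%:E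
  = (\int[sigma]_(x in setT) (poisson2 z1 z2 x)%:E)%E.
Hypothesis alpha1 : cabs alpha = 1.
Hypothesis m_gt0 : 0 < m.
Hypothesis atom : sigma [set t] = m%:E.

Local Notation P := (line_restriction p (expiC t.1) (expiC t.2)).
Local Notation Q := (line_restriction q (expiC t.1) (expiC t.2)).
Local Notation D := (alpha%:P * Q - P).

(* the atom bounds the Clark density from below along the line *)
Lemma slice_inequality {l : C} : cabs l < 1 ->
  [/\ Q.[l] != 0, D.[l] != 0 &
      m * disk_kernel l ^+ 2 * cabs D.[l] ^+ 2
      <= 2 * complex.Re (alpha * Q.[l] * (D.[l])^*%C)].
Proof.
move=> hl; set a := expiC t.1; set b := expiC t.2.
have in1 : inD (a * l) by rewrite /inD cabsM cabs_expiC mul1r.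
have in2 : inD (b * l) by rewrite /inD cabsM cabs_expiC mul1r.
have [Q0 phiE] := phi_pq _ _ in1 in2.
have k_gt0 : 0 < m * disk_kernel l ^+ 2.
  have l1 : 1 - l != 0 by rewrite subr_eq0; apply: contraTneq hl => <-; rewrite cabs1 ltxx.
  have cl := cabs_ge0 l.
  by rewrite mulr_gt0 // exprn_gt0 // divr_gt0 ?exprn_gt0 ?cabs_gt0 //; nra.
have lb := atom_le_integral sigma _ t (fun x => poisson2_ge0 _ _ x in1 in2).
rewrite -clark // atom -EFinM lee_fin poisson2_line phiE mulrC in lb.
rewrite -!line_restrictionE in Q0 lb.
have [D0 ineq] := clark_density_bound alpha1 Q0 k_gt0 lb.
by rewrite hornerD hornerN hornerM hornerC; split.
Qed.

Lemma slice_radial r : 0 <= r < 1 ->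
  m * cabs D.[r%:C] <= 2 * (1 - r) ^+ 2 * cabs Q.[r%:C].
Proof.
move=> r01; have hr : cabs r%:C < 1.
  by case/andP: r01 => r0 r1; rewrite cabs_real ger0_norm.
have [_ D0 ineq] := slice_inequality hr.
rewrite disk_kernel_real // in ineq.
apply: radial_bound m_gt0 r01 (cabs_gt0 D0) ineq _.
have := Re_le_cabs (alpha * Q.[r%:C] * (D.[r%:C])^*%C).
by rewrite !cabsM alpha1 mul1r cabs_conj.
Qed.

Lemma slice_halfplane l : cabs l < 1 -> 0 <= complex.Re (alpha * Q.[l] * (D.[l])^*%C).
Proof.
move=> hl; have [_ _ ineq] := slice_inequality hl.
have : 0 <= m * disk_kernel l ^+ 2 * cabs D.[l] ^+ 2.
  by rewrite mulr_ge0 ?sqr_ge0 // mulr_ge0 ?sqr_ge0 // ltW.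
lra.
Qed.

Lemma no_atom : False.
Proof.
have hl0 : cabs (0 : C) < 1 by rewrite cabs0 ltr01.
have [Q0 D0 _] := slice_inequality hl0.
apply: (slice_obstruction Q D alpha m m_gt0 _ _ _ slice_radial slice_halfplane).
- by rewrite -cabs_eq0 alpha1 oner_eq0.
- by apply: contra_neq Q0 => ->; rewrite horner0.
- by apply: contra_neq D0 => ->; rewrite horner0.
Qed.

End NoAtom.

Theorem theorem2p1 (R : realType) (phi : R[i] -> R[i] -> R[i]) (alpha : R[i]) :
  is_RIF phi ->
  ~ (exists c : R[i], forall z1 z2, inD z1 -> inD z2 -> phi z1 z2 = c) ->
  cabs alpha = 1 ->
  forall sigma : {measure set (R * R)%type -> \bar R},
    is_clark_measure phi alpha sigma ->
    forall t : R * R, sigma [set t] = 0%E.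
Proof.
move=> [p [q [phi_pq _]]] _ alpha1 sigma [sigma_fin [_ clark]] t.
have atom_fin : sigma [set t] \is a fin_num.
  rewrite ge0_fin_numE ?measure_ge0 //; apply: le_lt_trans sigma_fin.
  have mt := measurable_point t.
  by apply: le_measure; rewrite ?inE //; exact: measurableT.
have m_ge0 : 0 <= fine (sigma [set t]) by rewrite fine_ge0 ?measure_ge0.
rewrite -(fineK atom_fin); have [m_gt0|m_le0] := ltP 0 (fine (sigma [set t])).
  by case: (no_atom phi_pq clark alpha1 m_gt0 (esym (fineK atom_fin))).
by congr EFin; apply/eqP; rewrite eq_le m_le0 m_ge0.
Qed.
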